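(* For every integer $m\ge 1$, the number of $321$-avoiding permutations of $\{1,\dots,m\}$ whose last letter is not $m$ equals $C_m-C_{m-1}$, and the number of $321$-avoiding permutations of $\{1,\dots,m\}$ whose first letter is not $1$ also equals $C_m-C_{m-1}$. Consequently, for $n\ge 3$ the number of permutations of $\{1,\dots,n\}$ containing the pattern $321$ exactly once equals $$\sum_{b=2}^{n-1}(C_b-C_{b-1})(C_{n-b+1}-C_{n-b}).$$
   Context: $C_k=\frac{(2k)!}{k!\,(k+1)!}$ denotes the $k$-th Catalan number ($C_0=1$). Permutations are written in one-line notation; a permutation $w_1\cdots w_m$ is $321$-avoiding if there are no positions $i<j<k$ with $w_i>w_j>w_k$, and contains $321$ exactly once if there is exactly one such triple of positions. *)

(* Permutations of {1..m} are modelled as 'S_m = {perm 'I_m}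
   on {0..m-1}; the one-line word is w_{i+1} = s i + 1 (0-indexed shift). *)
From mathcomp Require Import all_boot all_fingroup.
Set Implicit Arguments. Unset Strict Implicit. Unset Printing Implicit Defensive.

Definition catalan (k : nat) : nat := (k.*2)`! %/ (k`! * k.+1`!).

Definition occ321 (m : nat) (s : 'S_m) : nat :=
  #|[set t : 'I_m * 'I_m * 'I_m |
      [&& (t.1.1 < t.1.2)%N, (t.1.2 < t.2)%N,
          (s t.1.2 < s t.1.1)%N & (s t.2 < s t.1.2)%N]]|.

Definition avoids321 (m : nat) (s : 'S_m) : bool := occ321 s == 0.

Definition last_not_max (m : nat) (s : 'S_m) : bool :=
  [forall i : 'I_m, (val i == m.-1) ==> (val (s i) != m.-1)].

Definition first_not_min (m : nat) (s : 'S_m) : bool :=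
  [forall i : 'I_m, (val i == 0) ==> (val (s i) != 0)].

From mathcomp Require Import all_boot all_fingroup.
From mathcomp Require Import zify.
Set Implicit Arguments. Unset Strict Implicit. Unset Printing Implicit Defensive.

(* Splitting on the first letter, the number of words w
      over an r-letter alphabet such that b :: w avoids 321, where j letters
      lie below b, satisfies the ballot recursion and equals
      'C(2r-j, r) - 'C(2r-j, r+1); with b = 0 this is C_r.
   2. Parts one and two.  A 321-avoider ending with its maximum (resp.
      starting with its minimum) is an (m-1)-letter avoider with that letter
      added, so there are C_{m-1} of them and C_m - C_{m-1} of the others.
   3. Part three.  If (i,p,k) is the unique 321 of w, then w p = p and
      w = P ++ p :: S where P is a rearrangement of {0..p-1} with a := w k
      replaced by c := w i, S one of {p+1..n-1} with c replaced by a, and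
      P a, c S avoid 321; conversely such a word has exactly one 321.
      Relabelling c as p (resp. a as p) shows that, for fixed p, the choices
      of P and S are counted by parts one and two, with m = p+1 and m = n-p.
      Summing over (p,a,c) gives the convolution of the theorem. *)

(* [has21 b w]: w contains a 21 pattern whose larger letter is below b, that
   is, b :: w contains a 321 starting at b. *)
Fixpoint has21 (b : nat) (w : seq nat) : bool :=
  if w is y :: w' then ((y < b) && has (fun z => z < y) w') || has21 b w' else false.

Fixpoint has321 (w : seq nat) : bool :=
  if w is x :: w' then has21 x w' || has321 w' else false.

Lemma has21_0 w : has21 0 w = false.
Proof. by elim: w. Qed.

Lemma has21_max b x w : has21 (maxn b x) w = has21 b w || has21 x w.
Proof.
elim: w => //= y w ->.
have -> : (y < maxn b x) = (y < b) || (y < x) by rewrite leq_max.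
by case: (y < b); case: (y < x); case: has; case: has21; case: has21.
Qed.

(* Peeling off the second letter: a 321 in b :: u :: w either uses b and u,
   or it survives in the word where b and u are merged into their maximum. *)
Lemma has321_cons2 b u w :
  has321 [:: b, u & w] = ((u < b) && has (fun z => z < u) w) || has321 (maxn b u :: w).
Proof.
rewrite /= has21_max.
by case: (u < b); case: has; case: (has21 b w); case: (has21 u w); case: (has321 w).
Qed.

Lemma has21P b w : reflect (exists j k, [/\ j < k, k < size w,
  nth 0 w j < b & nth 0 w k < nth 0 w j]) (has21 b w).
Proof.
elim: w => [|y w IH] /=; first by right=> -[j [k [? ? ?]]].
apply: (iffP orP).
  case=> [/andP[Hy /(has_nthP 0)[k Hk Hz]]|/IH[j [k [H1 H2 H3 H4]]]].
    by exists 0, k.+1.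
  by exists j.+1, k.+1.
case=> [[|j]] [[|k]] [H1 H2 H3 H4] //.
  by left; apply/andP; split=> //; apply/(has_nthP 0); exists k.
by right; apply/IH; exists j, k.
Qed.

Lemma has321P w : reflect (exists i j k, [/\ i < j, j < k, k < size w,
  nth 0 w j < nth 0 w i & nth 0 w k < nth 0 w j]) (has321 w).
Proof.
elim: w => [|x w IH] /=; first by right=> -[i [j [k [? ? ? ?]]]].
apply: (iffP orP).
  case=> [/has21P[j [k [H1 H2 H3 H4]]]|/IH[i [j [k [H1 H2 H3 H4 H5]]]]].
    by exists 0, j.+1, k.+1.
  by exists i.+1, j.+1, k.+1.
case=> [[|i]] [[|j]] [[|k]] [H1 H2 H3 H4 H5] //.
  by left; apply/has21P; exists j, k.
by right; apply/IH; exists i, j, k.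
Qed.

Lemma has21_map f b w : {in b :: w &, {mono f : x y / x < y}} ->
  has21 (f b) (map f w) = has21 b w.
Proof.
elim: w => //= y w IH Hm.
rewrite IH; last by apply: sub_in2 Hm => u; rewrite !inE => /orP[->|->]; rewrite ?orbT.
rewrite Hm ?inE ?eqxx ?orbT // has_map; congr (_ && _ || _).
by apply: eq_in_has => z Hz /=; apply: Hm; rewrite !inE ?eqxx ?Hz ?orbT.
Qed.

Lemma has321_map f w : {in w &, {mono f : x y / x < y}} ->
  has321 (map f w) = has321 w.
Proof.
elim: w => //= x w IH Hm.
by rewrite has21_map ?IH //; apply: sub_in2 Hm => u Hu; rewrite inE Hu orbT.
Qed.

Lemma has321_rcons w M : all (fun y => y < M) w -> has321 (rcons w M) = has321 w.
Proof.
have has21_rcons b v : all (fun y => y < M) v -> has21 b (rcons v M) = has21 b v.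
  elim: v => [|y v IH] /=; first by rewrite andbF.
  move=> /andP[HyM Hall]; rewrite IH // has_rcons.
  by have -> : (M < y) = false by lia.
elim: w => [|x w IH] //= /andP[_ Hall].
by rewrite has21_rcons // IH.
Qed.

Lemma perm_count_eq (T : eqType) (Q : pred T) (l1 l2 : seq T) :
  perm_eq l1 l2 -> count Q l1 = count Q l2.
Proof. by move/seq.permP. Qed.

Lemma perms_count_eq (Q : pred (seq nat)) s t : perm_eq s t ->
  count Q (permutations s) = count Q (permutations t).
Proof. by move=> H; apply/perm_count_eq/perm_permutations. Qed.

Lemma count_perms_cons (Q : pred (seq nat)) s : uniq s -> 0 < size s ->
  count Q (permutations s) =
  \sum_(x <- s) count (fun w => Q (x :: w)) (permutations (rem x s)).
Proof.
move=> Us Hs; rewrite (perm_count_eq _ (permutationsE Hs)) count_flatten sumnE big_map.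
by rewrite undup_id // big_map; apply: eq_bigr => x _; rewrite count_map.
Qed.

Lemma count_perms_map (g : seq nat -> seq nat) (Q : pred (seq nat)) s t :
  injective g -> (forall w, perm_eq (g w) t = perm_eq w s) ->
  (forall w, perm_eq w t -> exists v, g v = w) ->
  count Q (permutations t) = count (fun w => Q (g w)) (permutations s).
Proof.
move=> Ig Hg Sg; transitivity (count Q (map g (permutations s))); last by rewrite count_map.
apply: perm_count_eq; apply: uniq_perm.
- exact: permutations_uniq.
- by rewrite map_inj_uniq ?permutations_uniq.
move=> w; rewrite mem_permutations; apply/idP/mapP.
  by move=> /[dup] /Sg [v <-]; exists v; rewrite // mem_permutations -Hg.
by case=> v; rewrite mem_permutations -Hg => Hv ->.
Qed.

Lemma count_perms_rcons (Q : pred (seq nat)) s : uniq s -> 0 < size s ->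
  count Q (permutations s) =
  \sum_(x <- s) count (fun w => Q (rcons w x)) (permutations (rem x s)).
Proof.
have rev_perms (R : pred (seq nat)) t :
    count R (permutations t) = count (fun w => R (rev w)) (permutations t).
  apply: count_perms_map; first exact: (can_inj (@revK _)).
    by move=> w; rewrite perm_rev.
  by move=> w _; exists (rev w); rewrite revK.
move=> Us Hs; rewrite rev_perms count_perms_cons //; apply: eq_bigr => x _.
by rewrite (rev_perms (fun w => Q (rcons w x))); apply: eq_count => w /=; rewrite rev_cons.
Qed.

Lemma count_perms_relabel (f : nat -> nat) (Q : pred (seq nat)) s : injective f ->
  count Q (permutations (map f s)) = count (fun w => Q (map f w)) (permutations s).
Proof.
move=> If; apply: count_perms_map; first exact: inj_map.
  by move=> w; apply/idP/idP => [/perm_map_inj|/perm_map] ->.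
move=> t Ht; exists (map (fun y => nth 0 s (index y (map f s))) t).
rewrite -map_comp -[RHS]map_id; apply/eq_in_map => y Hy /=.
have Hy' : y \in map f s by rewrite -(perm_mem Ht).
by rewrite -(nth_map 0 0) ?nth_index // -(size_map f) index_mem.
Qed.

Lemma sorted_count_le (s : seq nat) b t : sorted ltn s -> t < size s ->
  (count (fun y => y < b) s <= t) = (b <= nth 0 s t).
Proof.
elim: s t => [|y s IH] t //= Hs Ht.
have Hall : all (fun z => y < z) s by apply: (order_path_min ltn_trans) Hs.
have Hs' : sorted ltn s by apply: (path_sorted Hs).
have H0 : b <= y -> count (fun y0 => y0 < b) s = 0.
  move=> Hyb; apply/eqP; rewrite -leqn0 leqNgt -has_count; apply/hasPn => z Hz /=.
  by move/allP: Hall => /(_ z Hz) /= ?; lia.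
case: t Ht => [|t] Ht /=.
  by case: (ltnP y b) => Hyb //=; rewrite H0.
case: (ltnP y b) => Hyb /=; first by rewrite add1n ltnS IH.
rewrite H0 //; symmetry.
have : nth 0 s t \in s by apply: mem_nth.
by move/allP: Hall => Hall /Hall /= ?; lia.
Qed.

Lemma sorted_count_nth (s : seq nat) t : sorted ltn s -> t < size s ->
  count (fun y => y < nth 0 s t) s = t.
Proof.
move=> Hs Ht; apply/eqP; rewrite eqn_leq (sorted_count_le _ Hs Ht) leqnn /=.
case: t Ht => // t Ht; rewrite ltnNge (sorted_count_le _ Hs (ltnW Ht)) -ltnNge.
by apply: (sorted_ltn_nth ltn_trans 0 Hs); rewrite ?inE ?ltnSn //; apply: ltnW.
Qed.

(* The ballot numbers: [ballot r j] counts the rearrangements w of r letters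
   such that b :: w avoids 321 when j of the letters lie below b. *)
Definition ballot r j := 'C(r.*2 - j, r) - 'C(r.*2 - j, r.+1).

Lemma bin_decr m k : m <= k.*2.+1 -> 'C(m, k.+1) <= 'C(m, k).
Proof.
move=> H; have E := mul_bin_left m k.
have H2 : m - k <= k.+1 by lia.
by rewrite -(leq_pmul2l (ltn0Sn k)) E; apply: leq_mul.
Qed.

Lemma ballotS r j : j <= r -> ballot r.+1 j.+1 = ballot r j + ballot r.+1 j.+2.
Proof.
move=> Hj; rewrite /ballot.
have -> : r.+1.*2 - j.+1 = (r.*2 - j).+1 by lia.
have -> : r.+1.*2 - j.+2 = r.*2 - j by lia.
set n := r.*2 - j; rewrite !binS.
have H1 : 'C(n, r.+1) <= 'C(n, r) by apply: bin_decr; rewrite /n; lia.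
have H2 : 'C(n, r.+2) <= 'C(n, r.+1) by apply: bin_decr; rewrite /n; lia.
lia.
Qed.

Lemma ballot0 r : ballot r.+1 0 = ballot r.+1 1.
Proof.
rewrite /ballot subn0.
have -> : r.+1.*2 - 1 = r.*2.+1 by lia.
have -> : r.+1.*2 = r.*2.+2 by lia.
rewrite (binS r.*2.+1 r) (binS r.*2.+1 r.+1).
have E : 'C(r.*2.+1, r) = 'C(r.*2.+1, r.+1).
  have := bin_sub (n := r.*2.+1) (m := r.+1); rewrite -/(r.+1 <= _).
  have -> : r.*2.+1 - r.+1 = r by lia.
  by move=> ->; lia.
have H2 : 'C(r.*2.+1, r.+2) <= 'C(r.*2.+1, r.+1) by apply: bin_decr; lia.
lia.
Qed.

Lemma sum_ballot_tail r j : j <= r.+1 -> \sum_(j <= t < r.+1) ballot r t = ballot r.+1 j.+1.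
Proof.
move=> Hj; suff H : forall d, d <= r.+1 ->
    \sum_(r.+1 - d <= t < r.+1) ballot r t = ballot r.+1 (r.+1 - d).+1.
  by have := H (r.+1 - j) (leq_subr _ _); have -> : r.+1 - (r.+1 - j) = j by lia.
elim=> [|d IH] Hd.
  rewrite subn0 big_geq // /ballot.
  have -> : r.+1.*2 - r.+2 = r by lia.
  by rewrite !bin_small.
rewrite big_ltn; last by lia.
have -> : (r.+1 - d.+1).+1 = r.+1 - d by lia.
rewrite IH; last by lia.
have -> : r.+1 - d.+1 = r - d by lia.
have -> : r.+1 - d = (r - d).+1 by lia.
by rewrite -ballotS //; lia.
Qed.

(* The ballot recursion obtained by splitting on the first letter, whose rank
   is t: it is free when t >= j, must be the smallest letter when t < j. *)
Lemma ballot_first_letter r j : j <= r.+1 ->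
  \sum_(0 <= t < r.+1) (if j <= t then ballot r t else if t == 0 then ballot r j.-1 else 0)
  = ballot r.+1 j.
Proof.
case: j => [|j] Hj.
  by rewrite (eq_bigr (fun t => ballot r t)) // sum_ballot_tail // ballot0.
rewrite big_ltn // /= (big_cat_nat (n := j.+1)) //=.
rewrite big_nat_cond big1; last first.
  by move=> t /andP[/andP[H1 H2] _]; rewrite leqNgt H2 /=; case: t H1 H2.
rewrite add0n (eq_big_nat _ _ (F2 := fun t => ballot r t)); last first.
  by move=> t /andP[H1 H2]; rewrite H1.
by rewrite sum_ballot_tail; [rewrite (@ballotS r j Hj) | lia].
Qed.

Lemma catalan_ballot n : catalan n = ballot n 0.
Proof.
rewrite /catalan /ballot subn0.
have E := mul_bin_left n.*2 n.
have F := bin_fact (leq_addl n n : n <= n + n).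
have En : n.*2 - n = n by lia.
have En2 : n + n - n = n by lia.
rewrite En in E; rewrite En2 in F; rewrite -addnn in E *.
have H1 : 'C(n + n, n.+1) <= 'C(n + n, n) by apply: bin_decr; lia.
move: E F H1; set C := 'C(n + n, n); set C1 := 'C(n + n, n.+1) => E F H1.
have -> : (n + n)`! = (C - C1) * (n`! * n.+1`!).
  rewrite -F factS.
  have H : n.+1 * (C - C1) = C by rewrite mulnBr E; lia.
  by rewrite -{1}H; lia.
by rewrite mulnK // muln_gt0 !fact_gt0.
Qed.

(* Splitting on the first letter u, of rank t in the sorted alphabet s:
   b :: u :: w avoids 321 iff either u >= b or u is the smallest letter, and
   max(b, u) :: w avoids 321. *)
Lemma count_avoid_first_letter r s b t
    (IH : forall s' b', uniq s' -> size s' = r ->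
      count (fun w => ~~ has321 (b' :: w)) (permutations s') =
      ballot r (count (fun u => u < b') s')) :
  sorted ltn s -> size s = r.+1 -> t < r.+1 ->
  let u := nth 0 s t in let j := count (fun u => u < b) s in
  count (fun w => ~~ has321 [:: b, u & w]) (permutations (rem u s)) =
  if j <= t then ballot r t else if t == 0 then ballot r j.-1 else 0.
Proof.
move=> Hsort Hs Ht u j.
have Us : uniq s by apply: sorted_uniq Hsort; [exact: ltn_trans | exact: ltnn].
have Hu : u \in s by apply: mem_nth; rewrite Hs.
have Ur : uniq (rem u s) by apply: rem_uniq.
have Hr : size (rem u s) = r by rewrite size_rem // Hs.
have Prem : perm_eq s (u :: rem u s) by apply: perm_to_rem.
have E1 : (b <= u) = (j <= t) by rewrite sorted_count_le // Hs.
have Cu : count (fun z => z < u) (rem u s) = t.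
  rewrite -(sorted_count_nth Hsort (t := t)) ?Hs // -/u.
  by rewrite (perm_count_eq _ Prem) /= ltnn.
have E2 : has (fun z => z < u) (rem u s) = (0 < t) by rewrite has_count Cu.
transitivity (count (fun w => ((b <= u) || ~~ has (fun z => z < u) (rem u s))
                && ~~ has321 (maxn b u :: w)) (permutations (rem u s))).
  apply: eq_in_count => w; rewrite mem_permutations => Hw.
  by rewrite has321_cons2 negb_or negb_and -leqNgt (perm_has _ Hw).
rewrite E1 E2.
case: (leqP j t) => Hjt /=.
  rewrite IH //; have -> : maxn b u = u by apply/maxn_idPr; rewrite E1.
  by rewrite Cu.
case: (posnP t) => Ht0 /=; last by rewrite count_pred0.
rewrite IH //; have Hub : u < b by rewrite ltnNge E1 -ltnNge.
have -> : maxn b u = b by apply/maxn_idPl; apply: ltnW.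
congr ballot; rewrite /j (perm_count_eq _ Prem) /= Hub; lia.
Qed.

Lemma count_avoid_prefix r s b : uniq s -> size s = r ->
  count (fun w => ~~ has321 (b :: w)) (permutations s) =
  ballot r (count (fun u => u < b) s).
Proof.
elim: r s b => [|r IH] s b Us Hs; first by rewrite (size0nil Hs).
have Hp : perm_eq (sort leq s) s by rewrite perm_sort.
rewrite -(perms_count_eq _ Hp) -(perm_count_eq _ Hp).
have Hsort : sorted ltn (sort leq s).
  by rewrite ltn_sorted_uniq_leq sort_uniq Us sort_sorted //; exact: leq_total.
have Hs' : size (sort leq s) = r.+1 by rewrite size_sort.
move: (sort leq s) Hs' Hsort => {Hp Us Hs} s Hs Hsort.
have Us : uniq s by apply: sorted_uniq Hsort; [exact: ltn_trans | exact: ltnn].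
have Hj : count (fun u => u < b) s <= r.+1 by rewrite -Hs count_size.
rewrite count_perms_cons ?Hs // (big_nth 0) Hs -(ballot_first_letter Hj).
apply: eq_big_nat => t /andP[_ Ht].
exact: (@count_avoid_first_letter r s b t IH Hsort Hs Ht).
Qed.

Lemma count_avoid n : count (fun w => ~~ has321 w) (permutations (iota 0 n)) = catalan n.
Proof.
rewrite catalan_ballot -[in RHS](count_pred0 (iota 0 n)).
rewrite -(count_avoid_prefix 0 (iota_uniq 0 n) (size_iota 0 n)).
by apply: eq_count => w /=; rewrite has21_0.
Qed.

Lemma iotaSr m : iota 0 m.+1 = rcons (iota 0 m) m.
Proof. by rewrite -addn1 iotaD cats1. Qed.

Lemma count_split (T : Type) (a b : pred T) s :
  count a s = count (fun x => a x && b x) s + count (fun x => a x && ~~ b x) s.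
Proof. by elim: s => //= x s ->; case: (a x); case: (b x) => /=; lia. Qed.

Lemma rem_rcons_last (x : nat) s : x \notin s -> rem x (rcons s x) = s.
Proof.
elim: s => /= [|z s IH]; first by rewrite eqxx.
by rewrite inE negb_or => /andP[H1 /IH ->]; rewrite eq_sym (negbTE H1).
Qed.

Lemma rem_rcons_in (x y : nat) s : x \in s -> rem x (rcons s y) = rcons (rem x s) y.
Proof.
elim: s => //= z s IH; rewrite inE.
case: (eqVneq z x) => [_|Hzx] //= Hx.
by rewrite IH //; move: Hx; rewrite eq_sym (negbTE Hzx).
Qed.

(* 321-avoiders ending with their maximum m are the avoiders of 0..m-1
   followed by m. *)
Lemma count_avoid_last_max m :
  count (fun w => ~~ has321 w && (last 0 w == m)) (permutations (iota 0 m.+1)) = catalan m.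
Proof.
rewrite count_perms_rcons ?iota_uniq ?size_iota // iotaSr big_rcons /=.
rewrite big_seq_cond big1 ?addn0; last first.
  move=> x /andP[Hx _]; rewrite (eq_count (a2 := pred0)) ?count_pred0 // => w.
  rewrite /= last_rcons; have /negbTE -> : x != m by move: Hx; rewrite mem_iota; lia.
  by rewrite andbF.
rewrite rem_rcons_last; last by rewrite mem_iota; lia.
rewrite -count_avoid; apply: eq_in_count => w; rewrite mem_permutations => Hw /=.
rewrite last_rcons eqxx andbT has321_rcons //; apply/allP => y.
by rewrite (perm_mem Hw) mem_iota.
Qed.

(* 321-avoiders starting with their minimum 0 are 0 followed by a shifted
   avoider of 0..m-1. *)
Lemma count_avoid_head_min m :
  count (fun w => ~~ has321 w && (head 0 w == 0)) (permutations (iota 0 m.+1)) = catalan m.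
Proof.
rewrite count_perms_cons ?iota_uniq ?size_iota //= big_cons.
rewrite big_seq_cond big1 ?addn0; last first.
  move=> x /andP[Hx _]; rewrite (eq_count (a2 := pred0)) ?count_pred0 // => w.
  have /negbTE /= -> : x != 0 by move: Hx; rewrite mem_iota; lia.
  by rewrite andbF.
rewrite eqxx -(addn0 1) iotaDl count_perms_relabel; last exact: addnI.
rewrite -count_avoid; apply: eq_count => w /=.
by rewrite andbT has21_0 /= has321_map // => x y _ _; rewrite ltn_add2l.
Qed.

Lemma count_avoid_last_not_max m : 0 < m ->
  count (fun w => ~~ has321 w && (last 0 w != m.-1)) (permutations (iota 0 m))
  = catalan m - catalan m.-1.
Proof.
case: m => // m _.
have := count_split (fun w => ~~ has321 w) (fun w => last 0 w == m) (permutations (iota 0 m.+1)).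
by rewrite count_avoid count_avoid_last_max /=; lia.
Qed.

Lemma count_avoid_head_not_min p m : 0 < m ->
  count (fun w => ~~ has321 w && (head 0 w != p)) (permutations (iota p m))
  = catalan m - catalan m.-1.
Proof.
case: m => // m _.
have -> : iota p m.+1 = map (addn p) (iota 0 m.+1) by rewrite -iotaDl addn0.
rewrite count_perms_relabel; last exact: addnI.
transitivity (count (fun w => ~~ has321 w && (head 0 w != 0)) (permutations (iota 0 m.+1))).
  apply: eq_in_count => w; rewrite mem_permutations => Hw /=.
  rewrite has321_map; last by move=> x y _ _; rewrite ltn_add2l.
  case: w Hw => [|x w] Hw; first by have := perm_size Hw; rewrite size_iota.
  by rewrite /= -{2}(addn0 p) eqn_add2l.
have := count_split (fun w => ~~ has321 w) (fun w => head 0 w == 0) (permutations (iota 0 m.+1)).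
by rewrite count_avoid count_avoid_head_min /=; lia.
Qed.

Definition word_of m (s : 'S_m) : seq nat := [seq val (s i) | i <- enum 'I_m].

Lemma size_word_of m (s : 'S_m) : size (word_of s) = m.
Proof. by rewrite size_map size_enum_ord. Qed.

Lemma nth_word_of m (s : 'S_m) (i : 'I_m) : nth 0 (word_of s) i = s i.
Proof. by rewrite /word_of (nth_map i) ?size_enum_ord ?ltn_ord // nth_ord_enum. Qed.

Lemma word_of_perm m (s : 'S_m) : perm_eq (word_of s) (iota 0 m).
Proof.
apply: uniq_perm; rewrite ?iota_uniq //.
  by rewrite /word_of map_inj_uniq ?enum_uniq // => i j /val_inj /perm_inj.
move=> x; rewrite mem_iota leq0n add0n /word_of; apply/idP/idP.
  by case/mapP=> i _ ->; rewrite /= ltn_ord.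
move=> Hx; apply/mapP; exists ((s^-1)%g (Ordinal Hx)); rewrite ?mem_enum //.
by rewrite permKV.
Qed.

Lemma word_of_inj m : injective (@word_of m).
Proof.
move=> s t E; apply/permP => i; apply: val_inj.
by change (nat_of_ord (s i) = nat_of_ord (t i)); rewrite -!nth_word_of E.
Qed.

Lemma word_of_surj m (w : seq nat) : perm_eq w (iota 0 m) -> exists s : 'S_m, word_of s = w.
Proof.
move=> Hw; have Hsz : size w = m by rewrite (perm_size Hw) size_iota.
have Hlt (i : 'I_m) : nth 0 w i < m.
  have : nth 0 w i \in iota 0 m by rewrite -(perm_mem Hw) mem_nth // Hsz.
  by rewrite mem_iota.
pose f (i : 'I_m) : 'I_m := Ordinal (Hlt i).
have Uw : uniq w by rewrite (perm_uniq Hw) iota_uniq.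
have finj : injective f.
  move=> i j /(congr1 val) /= E; apply: val_inj => /=.
  by apply/eqP; rewrite -(nth_uniq 0 _ _ Uw) ?Hsz ?ltn_ord // E.
exists (perm finj); apply: (@eq_from_nth _ 0); first by rewrite size_word_of.
by move=> k; rewrite size_word_of => Hk; rewrite (nth_word_of _ (Ordinal Hk)) permE.
Qed.

Lemma card_perm_word m (P : pred (seq nat)) :
  #|[set s : 'S_m | P (word_of s)]| = count P (permutations (iota 0 m)).
Proof.
rewrite cardE -size_filter -(size_map (@word_of m)); apply: perm_size.
apply: uniq_perm.
- by rewrite map_inj_uniq ?enum_uniq //; apply: word_of_inj.
- by rewrite filter_uniq // permutations_uniq.
move=> w; rewrite mem_filter mem_permutations; apply/mapP/idP.
  by case=> s; rewrite mem_enum inE => Hs ->; rewrite Hs word_of_perm.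
case/andP=> Pw /word_of_surj [s Hs]; exists s => //.
by rewrite mem_enum inE Hs.
Qed.

Definition occ321w n (w : seq nat) := [set t : 'I_n * 'I_n * 'I_n |
  [&& (t.1.1 < t.1.2)%N, (t.1.2 < t.2)%N,
      (nth 0 w t.1.2 < nth 0 w t.1.1)%N & (nth 0 w t.2 < nth 0 w t.1.2)%N]].

Lemma occ321_word_of m (s : 'S_m) : occ321 s = #|occ321w m (word_of s)|.
Proof. by apply: eq_card => t; rewrite !inE !nth_word_of. Qed.

Lemma avoids321_word_of m (s : 'S_m) : avoids321 s = ~~ has321 (word_of s).
Proof.
rewrite /avoids321 occ321_word_of cards_eq0; apply/eqP/idP.
  move=> E; apply/has321P => -[i [j [k [H1 H2 H3 H4 H5]]]].
  rewrite size_word_of in H3.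
  have Hj : j < m by lia.
  have Hi : i < m by lia.
  have : (Ordinal Hi, Ordinal Hj, Ordinal H3) \in occ321w m (word_of s).
    by rewrite inE /= H1 H2 H4 H5.
  by rewrite E inE.
move=> H; apply/setP => t; rewrite !inE; apply/negbTE/negP.
case/and4P=> H1 H2 H3 H4; move/negP: H; apply; apply/has321P.
by exists t.1.1, t.1.2, t.2; rewrite size_word_of; split.
Qed.

Lemma last_not_max_word_of m (s : 'S_m) : 0 < m ->
  last_not_max s = (last 0 (word_of s) != m.-1).
Proof.
move=> Hm; have Hm1 : m.-1 < m by lia.
rewrite -nth_last size_word_of (nth_word_of _ (Ordinal Hm1)).
apply/forallP/idP; first by move/(_ (Ordinal Hm1)); rewrite /= eqxx.
by move=> H i; apply/implyP => /eqP Hi; have -> : i = Ordinal Hm1 by apply: val_inj.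
Qed.

Lemma first_not_min_word_of m (s : 'S_m) : 0 < m ->
  first_not_min s = (head 0 (word_of s) != 0).
Proof.
move=> Hm; rewrite -nth0 (nth_word_of _ (Ordinal Hm)).
apply/forallP/idP; first by move/(_ (Ordinal Hm)).
by move=> H i; apply/implyP => /eqP Hi; have -> : i = Ordinal Hm by apply: val_inj.
Qed.

Definition is321 n (w : seq nat) i j k :=
  [&& i < j, j < k, k < n, nth 0 w j < nth 0 w i & nth 0 w k < nth 0 w j].

Definition unique321 n w i0 j0 k0 := is321 n w i0 j0 k0 /\
  forall i j k, is321 n w i j k -> [/\ i = i0, j = j0 & k = k0].

Lemma occ321w1P n w :
  reflect (exists i0 j0 k0, unique321 n w i0 j0 k0) (#|occ321w n w| == 1).
Proof.
apply: (iffP idP).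
  case/cards1P=> t0 Et0.
  have : t0 \in occ321w n w by rewrite Et0 set11.
  rewrite inE => /and4P[H1 H2 H3 H4].
  exists t0.1.1, t0.1.2, t0.2; split; first by apply/and5P; split=> //; apply: ltn_ord.
  move=> i j k /and5P[K1 K2 K3 K4 K5].
  have Hi : i < n by lia.
  have Hj : j < n by lia.
  have : (Ordinal Hi, Ordinal Hj, Ordinal K3) \in occ321w n w by rewrite inE /= K1 K2 K4 K5.
  by rewrite Et0 in_set1 => /eqP <-.
case=> i0 [j0 [k0 [/and5P[H1 H2 H3 H4 H5] Hu]]].
have Hi : i0 < n by lia.
have Hj : j0 < n by lia.
apply/cards1P; exists (Ordinal Hi, Ordinal Hj, Ordinal H3); apply/setP => t.
rewrite !inE; apply/idP/eqP => [/and4P[K1 K2 K3 K4]|->]; last by rewrite /= H1 H2 H4 H5.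
have [E1 E2 E3] := Hu t.1.1 t.1.2 t.2 (ltac:(apply/and5P; split=> //; apply: ltn_ord)).
case: t E1 E2 E3 {K1 K2 K3 K4} => [[ti tj] tk] /= E1 E2 E3.
by congr (_, _, _); apply: val_inj.
Qed.

(* The shape of a word whose only 321 has its middle at position p, its
   smallest letter a and its largest letter c: the middle letter is p, the
   prefix holds 0..p-1 with a replaced by c and avoids 321 once a is
   appended, and the suffix holds p+1..n-1 with c replaced by a and avoids
   321 once c is prepended. *)
Definition split321 n p a c (w : seq nat) : bool :=
  [&& a < p, p < c, c < n, nth 0 w p == p,
      perm_eq (take p w) (c :: rem a (iota 0 p)),
      perm_eq (drop p.+1 w) (a :: rem c (iota p.+1 (n - p.+1))),
      ~~ has321 (rcons (take p w) a) & ~~ has321 (c :: drop p.+1 w)].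

Lemma perm_sub (s1 s2 : seq nat) : uniq s1 -> uniq s2 -> {subset s1 <= s2} ->
  size s2 <= size s1 -> perm_eq s1 s2.
Proof. by move=> U1 U2 S Hs; apply: uniq_perm => //; apply: (uniq_min_size U1 S Hs).2. Qed.

Lemma count_lt_iota b n : b <= n -> count (fun v => v < b) (iota 0 n) = b.
Proof.
move=> Hb; rewrite -(subnKC Hb) iotaD count_cat.
rewrite (eq_in_count (a2 := predT)); last by move=> x; rewrite mem_iota /=; lia.
rewrite (eq_in_count (a1 := fun v => v < b) (a2 := pred0)); last first.
  by move=> x; rewrite mem_iota /=; lia.
by rewrite count_predT count_pred0 size_iota addn0.
Qed.

Lemma iota_split p n : p < n -> iota 0 n = iota 0 p ++ p :: iota p.+1 (n - p.+1).
Proof. by move=> Hp; rewrite -[in LHS](subnKC (ltnW Hp)) iotaD /= -subnSK. Qed.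

Section Word.
Variables (n : nat) (w : seq nat).
Hypothesis Hw : perm_eq w (iota 0 n).
Local Notation f := (nth 0 w).

Lemma size_w : size w = n.
Proof. by rewrite (perm_size Hw) size_iota. Qed.

Lemma uniq_w : uniq w.
Proof. by rewrite (perm_uniq Hw) iota_uniq. Qed.

Lemma nth_w_lt i : i < n -> f i < n.
Proof.
move=> Hi; have : f i \in iota 0 n by rewrite -(perm_mem Hw) mem_nth // size_w.
by rewrite mem_iota.
Qed.

Lemma nth_w_inj i j : i < n -> j < n -> f i = f j -> i = j.
Proof. by move=> Hi Hj E; apply/eqP; rewrite -(nth_uniq 0 _ _ uniq_w) ?size_w // E. Qed.

Lemma w_map : w = map f (iota 0 n).
Proof. by rewrite -{1}(mkseq_nth 0 w) size_w. Qed.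

Lemma take_w p : p <= n -> take p w = map f (iota 0 p).
Proof. by move=> Hp; rewrite {1}w_map -map_take take_iota; congr map; congr iota; lia. Qed.

Lemma drop_w p : p < n -> drop p.+1 w = map f (iota p.+1 (n - p.+1)).
Proof. by move=> Hp; rewrite {1}w_map -map_drop drop_iota. Qed.

Lemma map_w_uniq l : {subset l <= iota 0 n} -> uniq l -> uniq (map f l).
Proof.
move=> Hl Ul; rewrite map_inj_in_uniq // => x y /Hl + /Hl +.
by rewrite !mem_iota => Hx Hy; apply: nth_w_inj; lia.
Qed.

Lemma nth_prefix p a x : x <= p -> p <= n ->
  nth 0 (rcons (map f (iota 0 p)) a) x = if x < p then f x else a.
Proof.
move=> Hx Hp; rewrite nth_rcons size_map size_iota.
case: ltnP => H; first by rewrite (nth_map 0) ?size_iota // nth_iota.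
by have -> : x == p by lia.
Qed.

Lemma nth_suffix p c y : p < n -> y < n - p ->
  nth 0 (c :: map f (iota p.+1 (n - p.+1))) y = if y == 0 then c else f (p + y).
Proof.
move=> Hp Hy; case: y Hy => [|y] Hy //=.
by rewrite (nth_map 0) ?size_iota ?nth_iota; [congr nth; lia | lia | lia].
Qed.

Section Unique.
Variables i0 j0 k0 : nat.
Hypothesis Hu : unique321 n w i0 j0 k0.

Let H321 : is321 n w i0 j0 k0. Proof. by case: Hu. Qed.
Let Hj0 : j0 < n. Proof. by case/and5P: H321; lia. Qed.

Lemma unique321_before x : x < j0 -> x != i0 -> f x < f j0.
Proof.
move=> Hx Hxi; case/and5P: H321 => H1 H2 H3 H4 H5; case: Hu => _ Hu'.
case: (ltngtP (f x) (f j0)) => // Hfx.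
  have [E _ _] := Hu' x j0 k0 (ltac:(apply/and5P; split=> //; lia)).
  by rewrite E eqxx in Hxi.
by have := @nth_w_inj x j0 (ltac:(lia)) Hj0 Hfx; lia.
Qed.

Lemma unique321_after x : j0 < x -> x < n -> x != k0 -> f j0 < f x.
Proof.
move=> Hx Hxn Hxk; case/and5P: H321 => H1 H2 H3 H4 H5; case: Hu => _ Hu'.
case: (ltngtP (f x) (f j0)) => // Hfx.
  have [_ _ E] := Hu' i0 j0 x (ltac:(apply/and5P; split=> //; lia)).
  by rewrite E eqxx in Hxk.
by have := nth_w_inj Hxn Hj0 Hfx; lia.
Qed.

(* Exactly j0 letters are smaller than the middle one: those at positions
   below j0 other than i0, and the one at k0.  So the middle letter is j0. *)
Lemma unique321_middle : f j0 = j0.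
Proof.
case/and5P: H321 => H1 H2 H3 H4 H5.
have Hbn : f j0 <= n by have := nth_w_lt Hj0; lia.
have := count_lt_iota Hbn; set b := f j0.
rewrite -(perm_count_eq _ Hw) {1}w_map count_map (iota_split Hj0) count_cat /= ltnn add0n.
rewrite (eq_in_count (a2 := fun x => x != i0)); last first.
  move=> x; rewrite mem_iota /= => Hx; case: (eqVneq x i0) => [->|Hxi] /=.
    by rewrite ltnNge ltnW.
  by apply: unique321_before => //; lia.
rewrite (eq_in_count (a1 := fun x => f x < b) (a2 := pred1 k0)); last first.
  move=> x; rewrite mem_iota /= => Hx; case: (eqVneq x k0) => [->|Hxk] //=.
  by rewrite ltnNge ltnW //; apply: unique321_after => //; lia.
have C1 : count (fun x => x != i0) (iota 0 j0) = j0.-1.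
  have := count_predC (pred1 i0) (iota 0 j0).
  rewrite count_uniq_mem ?iota_uniq // mem_iota size_iota.
  have -> : (0 <= i0 < 0 + j0) = true by lia.
  by move=> E; change (count (predC (pred1 i0)) (iota 0 j0) = j0.-1); lia.
have C2 : count (pred1 k0) (iota j0.+1 (n - j0.+1)) = 1.
  rewrite count_uniq_mem ?iota_uniq // mem_iota.
  by have -> : (j0.+1 <= k0 < j0.+1 + (n - j0.+1)) = true by lia.
by rewrite C1 C2; lia.
Qed.

Let Hfk : f k0 < j0.
Proof. by have := unique321_middle; case/and5P: H321 => *; lia. Qed.
Let Hfi : j0 < f i0 < n.
Proof.
have := unique321_middle; case/and5P: H321 => H1 H2 H3 H4 H5.
by have := @nth_w_lt i0 (ltac:(lia)); lia.
Qed.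

Lemma unique321_prefix : perm_eq (take j0 w) (f i0 :: rem (f k0) (iota 0 j0)).
Proof.
case/and5P: H321 => H1 H2 H3 H4 H5.
rewrite take_w ?(ltnW Hj0) //; apply: perm_sub.
- by apply: map_w_uniq; rewrite ?iota_uniq // => x; rewrite !mem_iota; lia.
- rewrite /= rem_uniq ?iota_uniq // andbT.
  by apply/negP => /mem_rem; rewrite mem_iota; lia.
- move=> v /mapP[x]; rewrite mem_iota => Hx ->.
  rewrite inE; case: (eqVneq x i0) => [->|Hxi]; first by rewrite eqxx.
  apply/orP; right; rewrite mem_rem_uniq ?iota_uniq // inE mem_iota.
  have := @unique321_before x (ltac:(lia)) Hxi; rewrite unique321_middle => Hlt.
  apply/andP; split; last by lia.
  by apply/eqP => E; have := @nth_w_inj x k0 (ltac:(lia)) (ltac:(lia)) E; lia.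
- by rewrite /= size_rem ?mem_iota ?size_map ?size_iota //; lia.
Qed.

Lemma unique321_suffix :
  perm_eq (drop j0.+1 w) (f k0 :: rem (f i0) (iota j0.+1 (n - j0.+1))).
Proof.
case/and5P: H321 => H1 H2 H3 H4 H5.
rewrite drop_w //; apply: perm_sub.
- by apply: map_w_uniq; rewrite ?iota_uniq // => x; rewrite !mem_iota; lia.
- rewrite /= rem_uniq ?iota_uniq // andbT.
  by apply/negP => /mem_rem; rewrite mem_iota; lia.
- move=> v /mapP[x]; rewrite mem_iota => Hx ->.
  rewrite inE; case: (eqVneq x k0) => [->|Hxk]; first by rewrite eqxx.
  apply/orP; right; rewrite mem_rem_uniq ?iota_uniq // inE mem_iota.
  have := @unique321_after x (ltac:(lia)) (ltac:(lia)) Hxk; rewrite unique321_middle => Hlt.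
  have := nth_w_lt (ltac:(lia) : x < n) => Hxn.
  apply/andP; split; last by lia.
  by apply/eqP => E; have := @nth_w_inj x i0 (ltac:(lia)) (ltac:(lia)) E; lia.
- by rewrite /= size_rem ?mem_iota ?size_map ?size_iota //; lia.
Qed.

(* A 321 in the prefix followed by f k0 would be a 321 of w avoiding j0. *)
Lemma unique321_prefix_avoid : ~~ has321 (rcons (take j0 w) (f k0)).
Proof.
case/and5P: H321 => H1 H2 H3 H4 H5; case: Hu => _ Hu'.
rewrite take_w ?(ltnW Hj0) //; apply/has321P => -[i [j [k [K1 K2 K3 K4 K5]]]].
rewrite size_rcons size_map size_iota in K3.
rewrite !nth_prefix in K4 K5; try lia.
have Hi : i < j0 by lia.
have Hj : j < j0 by lia.
rewrite Hi Hj in K4 K5.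
case: (ltnP k j0) => Hk.
  rewrite Hk in K5.
  by have [_ E _] := Hu' i j k (ltac:(apply/and5P; split=> //; lia)); lia.
rewrite (_ : k < j0 = false) in K5; last by lia.
have [_ E _] := Hu' i j k0 (ltac:(apply/and5P; split=> //; lia)); lia.
Qed.

(* A 321 in the suffix preceded by f i0 would be a 321 of w avoiding j0. *)
Lemma unique321_suffix_avoid : ~~ has321 (f i0 :: drop j0.+1 w).
Proof.
case/and5P: H321 => H1 H2 H3 H4 H5; case: Hu => _ Hu'.
rewrite drop_w //; apply/has321P => -[i [j [k [K1 K2 K3 K4 K5]]]].
rewrite /= size_map size_iota in K3.
rewrite !nth_suffix in K4 K5; try lia.
have Hj : (j == 0) = false by lia.
have Hk : (k == 0) = false by lia.
rewrite Hj Hk in K4 K5.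
case: (eqVneq i 0) => Hii; rewrite ?Hii /= in K4.
  by have [_ E _] := Hu' i0 (j0 + j) (j0 + k) (ltac:(apply/and5P; split=> //; lia)); lia.
rewrite (negbTE Hii) in K4.
have [E _ _] := Hu' (j0 + i) (j0 + j) (j0 + k) (ltac:(apply/and5P; split=> //; lia)); lia.
Qed.

Lemma unique321_split : split321 n j0 (f k0) (f i0) w.
Proof.
apply/and5P; split; rewrite ?Hfk ?(andP Hfi).1 ?(andP Hfi).2 ?unique321_middle //.
apply/and4P; split; [exact: unique321_prefix | exact: unique321_suffix |
  exact: unique321_prefix_avoid | exact: unique321_suffix_avoid].
Qed.

End Unique.

Section Split.
Variables p a c : nat.
Hypothesis Hs : split321 n p a c w.

Let Hapc : [/\ a < p, p < c & c < n]. Proof. by case/and5P: Hs. Qed.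

Lemma split321_prefix_letter x : x < p -> f x = c \/ (f x < p /\ f x != a).
Proof.
case/and5P: Hs => _ _ _ _ /and4P[HP _ _ _] Hx; case: Hapc => Hap Hpc Hcn.
have : f x \in c :: rem a (iota 0 p).
  by rewrite -(perm_mem HP) take_w; [apply: map_f; rewrite mem_iota | ]; lia.
rewrite inE mem_rem_uniq ?iota_uniq // inE mem_iota.
by case/orP => [/eqP -> | /andP[H1 H2]]; [left | right; split=> //; lia].
Qed.

Lemma split321_suffix_letter x : p < x -> x < n -> f x = a \/ (p < f x /\ f x != c).
Proof.
case/and5P: Hs => _ _ _ _ /and4P[_ HS _ _] Hx Hxn; case: Hapc => Hap Hpc Hcn.
have : f x \in a :: rem c (iota p.+1 (n - p.+1)).
  by rewrite -(perm_mem HS) drop_w; [apply: map_f; rewrite mem_iota | ]; lia.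
rewrite inE mem_rem_uniq ?iota_uniq // inE mem_iota.
by case/orP => [/eqP -> | /andP[H1 H2]]; [left | right; split=> //; lia].
Qed.

Lemma split321_prefix_no321 i j k : i < j -> j < k -> k <= p ->
  f j < f i -> (if k < p then f k else a) < f j -> False.
Proof.
case/and5P: Hs => _ _ _ _ /and4P[_ _ QP _] H1 H2 H3 H4 H5; case: Hapc => Hap Hpc Hcn.
move/negP: QP; apply; apply/has321P; rewrite take_w; last by lia.
exists i, j, k; rewrite size_rcons size_map size_iota !nth_prefix //; [| lia ..].
have Hi : i < p by lia.
have Hj : j < p by lia.
by rewrite Hi Hj; split.
Qed.

Lemma split321_suffix_no321 i j k : p <= i -> i < j -> j < k -> k < n ->
  f j < (if i == p then c else f i) -> f k < f j -> False.
Proof.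
case/and5P: Hs => _ _ _ _ /and4P[_ _ _ QS] H0 H1 H2 H3 H4 H5; case: Hapc => Hap Hpc Hcn.
move/negP: QS; apply; apply/has321P; rewrite drop_w; last by lia.
exists (i - p), (j - p), (k - p); rewrite /= size_map size_iota !nth_suffix; [| lia ..].
have Ej : (j - p == 0) = false by lia.
have Ek : (k - p == 0) = false by lia.
rewrite Ej Ek !subnKC; [| lia ..].
case: (eqVneq i p) H4 => [->|Hip] H4; first by rewrite subnn; split=> //; lia.
have Ei : (i - p == 0) = false by lia.
by rewrite Ei; split=> //; lia.
Qed.

Lemma split321_pos_c : exists2 i0, i0 < p & c = f i0.
Proof.
case/and5P: Hs => _ _ _ _ /and4P[HP _ _ _]; case: Hapc => Hap Hpc Hcn.
have : c \in map f (iota 0 p) by rewrite -take_w ?(perm_mem HP) ?mem_head //; lia.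
by case/mapP => x; rewrite mem_iota => Hx ->; exists x => //; lia.
Qed.

Lemma split321_pos_a : exists2 k0, p < k0 < n & a = f k0.
Proof.
case/and5P: Hs => _ _ _ _ /and4P[_ HS _ _]; case: Hapc => Hap Hpc Hcn.
have : a \in map f (iota p.+1 (n - p.+1)) by rewrite -drop_w ?(perm_mem HS) ?mem_head //; lia.
by case/mapP => x; rewrite mem_iota => Hx ->; exists x => //; lia.
Qed.

(* Any 321 either lies on one side of p,
   which the avoidance conditions forbid, or uses the middle letter. *)
Lemma split321_unique : exists i0 k0, [/\ unique321 n w i0 p k0, a = f k0 & c = f i0].
Proof.
have [i0 Hi0 Ei0] := split321_pos_c; have [k0 Hk0 Ek0] := split321_pos_a.
case/and5P: Hs => _ _ _ /eqP Hfp _; case: Hapc => Hap Hpc Hcn.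
have Ic x : x < n -> f x = c -> x = i0.
  by move=> Hx E; apply: nth_w_inj => //; [lia | rewrite E].
have Ia x : x < n -> f x = a -> x = k0.
  by move=> Hx E; apply: nth_w_inj => //; [lia | rewrite E].
exists i0, k0; split=> //; split; first by apply/and5P; split; lia.
move=> i j k /and5P[H1 H2 H3 H4 H5].
case: (ltngtP j p) => Hjp.
- exfalso.
  have Fi := split321_prefix_letter (ltac:(lia) : i < p).
  have Fj := split321_prefix_letter Hjp.
  have Ii := Ic i (ltac:(lia)); have Ij := Ic j (ltac:(lia)).
  case: (ltngtP k p) => Hkp.
  + by apply: (@split321_prefix_no321 i j k) => //; [lia | rewrite Hkp].
  + have Fk := split321_suffix_letter Hkp H3; have Ik := Ia k H3.
    case: Fj => Fj; first by case: Fi => Fi; lia.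
    by apply: (@split321_prefix_no321 i j p) => //; rewrite ltnn; lia.
  + by subst k; case: Fi; case: Fj; lia.
- exfalso.
  have Fj := split321_suffix_letter Hjp (ltac:(lia)).
  have Fk := split321_suffix_letter (ltac:(lia) : p < k) H3.
  have Ij := Ia j (ltac:(lia)); have Ik := Ia k H3.
  case: (ltnP i p) => Hip.
    case: (split321_prefix_letter Hip) => Fi; last by lia.
    by apply: (@split321_suffix_no321 p j k) => //; rewrite ?eqxx; lia.
  apply: (@split321_suffix_no321 i j k) => //; case: ifP => [/eqP Eip | _] //.
  by move: H4; rewrite Eip Hfp; lia.
- subst j.
  have Fi := split321_prefix_letter H1; have Fk := split321_suffix_letter H2 H3.
  have Ii := Ic i (ltac:(lia)); have Ik := Ia k H3.
  by split=> //; lia.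
Qed.

End Split.
End Word.

Lemma split321_unique321 n w i0 j0 k0 p a c :
  perm_eq w (iota 0 n) -> unique321 n w i0 j0 k0 ->
  split321 n p a c w = [&& p == j0, a == nth 0 w k0 & c == nth 0 w i0].
Proof.
move=> Hw Hu; apply/idP/and3P.
  case/(split321_unique Hw) => i1 [k1 [[H1 _] -> ->]].
  by have [-> -> ->] := Hu.2 _ _ _ H1; rewrite !eqxx.
by case=> /eqP -> /eqP -> /eqP ->; exact: unique321_split.
Qed.

Lemma sum_ord_single n (x : 'I_n) (F : 'I_n -> nat) :
  (forall i : 'I_n, val i != val x -> F i = 0) -> \sum_i F i = F x.
Proof. by move=> H0; rewrite (bigD1 x) //= big1 ?addn0 // => i Hi; apply: H0; rewrite val_eqE. Qed.

Lemma occ321w1_split n w : perm_eq w (iota 0 n) ->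
  (#|occ321w n w| == 1 : nat) = \sum_(p < n) \sum_(a < n) \sum_(c < n) split321 n p a c w.
Proof.
move=> Hw; case: occ321w1P => [[i0 [j0 [k0 Hu]]] | Hno].
  have /and5P[H1 H2 H3 _ _] := Hu.1.
  have Ek p a c := split321_unique321 p a c Hw Hu.
  have Hk : nth 0 w k0 < n by apply: (nth_w_lt Hw); lia.
  have Hi : nth 0 w i0 < n by apply: (nth_w_lt Hw); lia.
  rewrite (sum_ord_single (x := Ordinal (leq_ltn_trans (ltnW H2) H3))) => [|p /negbTE Hp].
    rewrite (sum_ord_single (x := Ordinal Hk)) => [|a /negbTE Ha].
      rewrite (sum_ord_single (x := Ordinal Hi)) => [|c /negbTE Hc].
        by rewrite Ek /= !eqxx.
      by rewrite Ek /= Hc !andbF.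
    by rewrite big1 // => c _; rewrite Ek /= Ha andbF.
  by rewrite big1 // => a _; rewrite big1 // => c _; rewrite Ek /= Hp.
rewrite big1 // => p _; rewrite big1 // => a _; rewrite big1 // => c _.
case Hs: (split321 n p a c w) => //; exfalso; apply: Hno.
by have [i0 [k0 [Hu _ _]]] := split321_unique Hw Hs; exists i0, p, k0.
Qed.

Lemma count_occ321w1_split n (l : seq (seq nat)) :
  (forall w, w \in l -> perm_eq w (iota 0 n)) ->
  count (fun w => #|occ321w n w| == 1) l =
  \sum_(p < n) \sum_(a < n) \sum_(c < n) count (split321 n p a c) l.
Proof.
elim: l => [|w l IH] Hl.
  by rewrite big1 // => p _; rewrite big1 // => a _; rewrite big1.
rewrite /= IH; last by move=> v Hv; apply: Hl; rewrite inE Hv orbT.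
rewrite (occ321w1_split (Hl w (mem_head _ _))) -big_split; apply: eq_bigr => p _.
by rewrite -big_split; apply: eq_bigr => a _; rewrite -big_split.
Qed.

Section SplitCount.
Variables n p a c : nat.
Hypotheses (Hap : a < p) (Hpc : p < c) (Hcn : c < n).

Local Notation VP := (c :: rem a (iota 0 p)).
Local Notation VS := (a :: rem c (iota p.+1 (n - p.+1))).
Local Notation QP := (fun P => ~~ has321 (rcons P a)).
Local Notation QS := (fun S => ~~ has321 (c :: S)).

Lemma size_prefix_alphabet : size VP = p.
Proof. by rewrite /= size_rem ?size_iota ?mem_iota //; lia. Qed.

Lemma size_suffix_alphabet : size VS = n - p.+1.
Proof. by rewrite /= size_rem ?size_iota ?mem_iota //; lia. Qed.

Lemma perm_split_word P S : perm_eq P VP -> perm_eq S VS -> perm_eq (P ++ p :: S) (iota 0 n).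
Proof.
move=> /seq.permP HP /seq.permP HS; rewrite (iota_split (ltn_trans Hpc Hcn)).
have /seq.permP Ea : perm_eq (iota 0 p) (a :: rem a (iota 0 p)).
  by apply: perm_to_rem; rewrite mem_iota; lia.
have /seq.permP Ec : perm_eq (iota p.+1 (n - p.+1)) (c :: rem c (iota p.+1 (n - p.+1))).
  by apply: perm_to_rem; rewrite mem_iota; lia.
apply/seq.permP => q; have := HP q; have := HS q; have := Ea q; have := Ec q.
by rewrite !count_cat /=; lia.
Qed.

Lemma split321_cat P S : size P = p ->
  split321 n p a c (P ++ p :: S) = [&& perm_eq P VP, perm_eq S VS, QP P & QS S].
Proof.
move=> HszP; rewrite /split321 Hap Hpc Hcn nth_cat HszP ltnn subnn eqxx take_size_cat //.
by rewrite -cat_rcons drop_size_cat // size_rcons HszP.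
Qed.

Lemma count_split321 : count (split321 n p a c) (permutations (iota 0 n)) =
  count QP (permutations VP) * count QS (permutations VS).
Proof.
rewrite -!size_filter -(size_allpairs (fun P S => P ++ p :: S)); apply: perm_size.
have szP P : P \in filter QP (permutations VP) -> size P = p.
  by rewrite mem_filter mem_permutations => /andP[_ /perm_size ->]; exact: size_prefix_alphabet.
have szS S : S \in filter QS (permutations VS) -> size S = n - p.+1.
  by rewrite mem_filter mem_permutations => /andP[_ /perm_size ->]; exact: size_suffix_alphabet.
apply: uniq_perm.
- by rewrite filter_uniq // permutations_uniq.
- apply: allpairs_uniq; rewrite ?filter_uniq ?permutations_uniq //.
  move=> [P1 S1] [P2 S2] /allpairsP[[x1 y1] [Hx1 Hy1 [-> ->]]]
                         /allpairsP[[x2 y2] [Hx2 Hy2 [-> ->]]] /= E.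
  have E1 := congr1 (take p) E; rewrite !take_size_cat ?szP // in E1.
  have E2 := congr1 (drop p) E; rewrite !drop_size_cat ?szP // in E2.
  by case: E2 => ->; rewrite E1.
move=> w; rewrite mem_filter mem_permutations; apply/andP/allpairsP.
  case=> Hs Hw; have Hpw : p < size w by rewrite (perm_size Hw) size_iota; lia.
  have Ew : w = take p w ++ p :: drop p.+1 w.
    by case/and5P: Hs => _ _ _ /eqP Hfp _; rewrite -[p in p :: _]Hfp -drop_nth // cat_take_drop.
  have : split321 n p a c (take p w ++ p :: drop p.+1 w) by rewrite -Ew.
  rewrite split321_cat ?size_take ?Hpw // => /and4P[HP HS QPw QSw].
  exists (take p w, drop p.+1 w); split=> //=.
  - by rewrite mem_filter mem_permutations HP QPw.
  - by rewrite mem_filter mem_permutations HS QSw.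
case=> [[P S]] [/= HP HS ->]; rewrite split321_cat ?szP //.
move: HP HS; rewrite !mem_filter !mem_permutations => /andP[-> HP] /andP[-> HS].
by rewrite HP HS perm_split_word.
Qed.

End SplitCount.

Definition swapn (u v x : nat) := if x == u then v else if x == v then u else x.

Lemma swapnK u v : involutive (swapn u v).
Proof.
move=> x; rewrite /swapn.
case: (eqVneq x u) => [->|Hxu]; first by rewrite eqxx; case: (eqVneq v u) => [->|]; rewrite ?eqxx.
case: (eqVneq x v) => [->|Hxv]; first by rewrite eqxx; case: (eqVneq u v).
by rewrite (negbTE Hxu) (negbTE Hxv).
Qed.

Lemma swapn_mono_up u v (l : seq nat) : u < v -> (forall x, x \in l -> x <= u) ->
  {in l &, {mono swapn u v : x y / x < y}}.
Proof.
move=> Huv Hl x y /Hl Hx /Hl Hy.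
by rewrite /swapn; repeat case: eqP => ?; apply/idP/idP; lia.
Qed.

Lemma swapn_mono_down u v (l : seq nat) : v < u -> (forall x, x \in l -> u <= x) ->
  {in l &, {mono swapn u v : x y / x < y}}.
Proof.
move=> Hvu Hl x y /Hl Hx /Hl Hy.
by rewrite /swapn; repeat case: eqP => ?; apply/idP/idP; lia.
Qed.

(* 321-avoiders of 0..p ending with a, listed by their first p letters. *)
Definition prefix_count p a :=
  count (fun P => ~~ has321 (rcons P a)) (permutations (p :: rem a (iota 0 p))).

(* 321-avoiders of p..n-1 starting with c, listed by their last letters. *)
Definition suffix_count n p c :=
  count (fun S => ~~ has321 (c :: S)) (permutations (p :: rem c (iota p.+1 (n - p.+1)))).

(* In a split prefix the letter c plays the role of the maximum p. *)
Lemma prefix_relabel p a c : a < p -> p < c ->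
  count (fun P => ~~ has321 (rcons P a)) (permutations (c :: rem a (iota 0 p))) =
  prefix_count p a.
Proof.
move=> Hap Hpc.
have Ha : swapn p c a = a by rewrite /swapn; repeat case: eqP => ?; lia.
have Emap : map (swapn p c) (p :: rem a (iota 0 p)) = c :: rem a (iota 0 p).
  rewrite /= /swapn eqxx; congr cons; apply: map_id_in => x /mem_rem.
  by rewrite mem_iota => Hx; repeat case: eqP => ?; lia.
rewrite /prefix_count -Emap count_perms_relabel; last exact: can_inj (swapnK p c).
apply: eq_in_count => w; rewrite mem_permutations => Hw /=.
rewrite -{1}Ha -map_rcons has321_map //; apply: swapn_mono_up => // x.
rewrite mem_rcons inE (perm_mem Hw) inE => /orP[/eqP ->|/orP[/eqP ->|/mem_rem]] //=.
  exact: ltnW.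
by rewrite mem_iota; lia.
Qed.

(* In a split suffix the letter a plays the role of the minimum p. *)
Lemma suffix_relabel n p a c : a < p -> p < c ->
  count (fun S => ~~ has321 (c :: S)) (permutations (a :: rem c (iota p.+1 (n - p.+1)))) =
  suffix_count n p c.
Proof.
move=> Hap Hpc.
have Hc : swapn p a c = c by rewrite /swapn; repeat case: eqP => ?; lia.
have Emap : map (swapn p a) (p :: rem c (iota p.+1 (n - p.+1))) =
    a :: rem c (iota p.+1 (n - p.+1)).
  rewrite /= /swapn eqxx; congr cons; apply: map_id_in => x /mem_rem.
  by rewrite mem_iota => Hx; repeat case: eqP => ?; lia.
rewrite /suffix_count -Emap count_perms_relabel; last exact: can_inj (swapnK p a).
apply: eq_in_count => w; rewrite mem_permutations => Hw /=.
rewrite -[has21 c _ || _]/(has321 (c :: map (swapn p a) w)) -{1}Hc -map_cons.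
rewrite has321_map //; apply: swapn_mono_down => // x.
rewrite inE (perm_mem Hw) inE => /orP[/eqP ->|/orP[/eqP ->|/mem_rem]] //=.
  exact: ltnW.
by rewrite mem_iota; lia.
Qed.

Lemma sum_prefix_count p : \sum_(a <- iota 0 p) prefix_count p a = catalan p.+1 - catalan p.
Proof.
rewrite -(count_avoid_last_not_max (ltn0Sn p)) count_perms_rcons ?iota_uniq ?size_iota //.
rewrite iotaSr big_rcons /= (eq_count (a2 := pred0)); last first.
  by move=> w /=; rewrite last_rcons eqxx andbF.
rewrite count_pred0 addn0 big_seq [RHS]big_seq; apply: eq_bigr => a Ha.
have Hap : a != p by move: Ha; rewrite mem_iota; lia.
rewrite rem_rcons_in // /prefix_count.
rewrite (perms_count_eq _ (_ : perm_eq _ (p :: rem a (iota 0 p)))) ?perm_rcons //.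
by apply: eq_count => w /=; rewrite last_rcons Hap andbT.
Qed.

Lemma sum_suffix_count n p : p < n ->
  \sum_(c <- iota p.+1 (n - p.+1)) suffix_count n p c = catalan (n - p) - catalan (n - p).-1.
Proof.
move=> Hpn; rewrite -(@count_avoid_head_not_min p (n - p)); last by lia.
have -> : iota p (n - p) = p :: iota p.+1 (n - p.+1).
  by rewrite (_ : n - p = (n - p.+1).+1) //; lia.
rewrite count_perms_cons ?size_iota //=; last by rewrite iota_uniq andbT mem_iota; lia.
rewrite big_cons eqxx (eq_count (a2 := pred0)); last by move=> w /=; rewrite andbF.
rewrite count_pred0 add0n big_seq [RHS]big_seq; apply: eq_bigr => c Hc.
have Hcp : (p == c) = false by move: Hc; rewrite mem_iota; lia.
by rewrite Hcp /suffix_count; apply: eq_count => w /=; rewrite eq_sym Hcp andbT.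
Qed.

(* Words with exactly one 321, listed by the position p of its middle
   letter: the prefix and suffix choices are counted by parts one and two. *)
Lemma count_occ321_once_by_middle n :
  count (fun w => #|occ321w n w| == 1) (permutations (iota 0 n)) =
  \sum_(p < n) (catalan p.+1 - catalan p) * (catalan (n - p) - catalan (n - p).-1).
Proof.
rewrite count_occ321w1_split; last by move=> w; rewrite mem_permutations.
apply: eq_bigr => p _.
transitivity ((\sum_(a < n) (if a < p then prefix_count p a else 0)) *
              (\sum_(c < n) (if p < c then suffix_count n p c else 0))).
  rewrite big_distrl; apply: eq_bigr => a _ /=.
  rewrite big_distrr; apply: eq_bigr => c _ /=.
  case: (boolP ((a < p) && (p < c))) => [/andP[Hap Hpc] | Hapc].
    by rewrite Hap Hpc count_split321 // prefix_relabel // suffix_relabel.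
  rewrite (eq_count (a2 := pred0)) ?count_pred0 => [|w]; last first.
    by apply/negbTE; apply: contra Hapc => /and3P[-> -> _].
  by case: (a < p) Hapc; case: (p < c) => /=; rewrite ?muln0.
rewrite -big_mkcond /= -(big_ord_widen _ (prefix_count p) (ltnW (ltn_ord p))).
rewrite -(big_mkord xpredT (prefix_count p)) /index_iota subn0 sum_prefix_count.
rewrite -big_mkcond /= -(sum_suffix_count (ltn_ord p)).
rewrite -[iota p.+1 (n - p.+1)]/(index_iota p.+1 n) big_geq_mkord.
by congr (_ * _); apply: eq_bigl.
Qed.

(* Part three on words: reindexing b = p + 1, the terms b = 1 and b = n
   vanish since C_1 = C_0. *)
Lemma count_occ321_once n : 3 <= n ->
  count (fun w => #|occ321w n w| == 1) (permutations (iota 0 n)) =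
  \sum_(2 <= b < n) (catalan b - catalan b.-1) * (catalan (n - b + 1) - catalan (n - b)).
Proof.
move=> Hn; rewrite count_occ321_once_by_middle.
set G := fun b => (catalan b - catalan b.-1) * (catalan (n - b + 1) - catalan (n - b)).
transitivity (\sum_(p < n) G p.+1).
  apply: eq_bigr => p _; rewrite /G /=.
  have Hp := ltn_ord p.
  have -> : n - p.+1 + 1 = n - p by lia.
  by have -> : (n - p).-1 = n - p.+1 by lia.
rewrite -(big_mkord xpredT (fun p => G p.+1)).
rewrite -(big_add1 _ _ 0 n.+1 xpredT G) big_ltn; last by lia.
rewrite big_nat_recr /=; last by lia.
by rewrite /G subnn add0n muln0 add0n addn0.
Qed.

Theorem mainTheorem3 :
  (forall m : nat, 0 < m ->
     #|[set s : 'S_m | avoids321 s && last_not_max s]| = catalan m - catalan m.-1)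
  /\
  (forall m : nat, 0 < m ->
     #|[set s : 'S_m | avoids321 s && first_not_min s]| = catalan m - catalan m.-1)
  /\
  (forall n : nat, 3 <= n ->
     #|[set s : 'S_n | occ321 s == 1]| =
       \sum_(2 <= b < n) (catalan b - catalan b.-1) * (catalan (n - b + 1) - catalan (n - b))).
Proof.
split; [|split].
- move=> m Hm; rewrite -(count_avoid_last_not_max Hm).
  rewrite -(card_perm_word m (fun w => ~~ has321 w && (last 0 w != m.-1))).
  by apply: eq_card => s; rewrite !inE avoids321_word_of last_not_max_word_of.
- move=> m Hm; rewrite -(count_avoid_head_not_min 0 Hm).
  rewrite -(card_perm_word m (fun w => ~~ has321 w && (head 0 w != 0))).
  by apply: eq_card => s; rewrite !inE avoids321_word_of first_not_min_word_of.
- move=> n Hn; rewrite -(count_occ321_once Hn).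
  rewrite -(card_perm_word n (fun w => #|occ321w n w| == 1)).
  by apply: eq_card => s; rewrite !inE occ321_word_of.
Qed.
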